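(* Let $C_2\subseteq C_1\subseteq\mathbb F_2^n$ be binary linear codes. Then $(C_1,C_2)$ is a binary CSS-$T$ pair if and only if $C_1\star C_1\subseteq C_2^\perp$.
   Context: $\langle x,y\rangle=\sum_i x_iy_i$ is the standard inner product on $\mathbb F_2^n$ and $C^\perp$ the dual code. For $a,b\in\mathbb F_2^n$, $a\star b=(a_1b_1,\dots,a_nb_n)$, and for codes $A,B$, $A\star B=\mathrm{span}\{a\star b:a\in A,b\in B\}$. The Hamming weight $\omega^{\mathrm H}(x)$ is the number of nonzero coordinates of $x$. A pair of binary linear codes $(C_1,C_2)$ with $C_2\subseteq C_1\subseteq\mathbb F_2^n$ is a binary CSS-$T$ pair if (i) $C_2$ is even, i.e. every $x\in C_2$ has even Hamming weight, and (ii) for every $x\in C_2$ there exists a linear code $C_x\subseteq C_1^\perp$ of dimension $\omega^{\mathrm H}(x)/2$ which is supported on $x$ (every $y\in C_x$ has $y_i=0$ whenever $x_i=0$) and is self-dual when regarded as a code of length $\omega^{\mathrm H}(x)$ on the support of $x$. *)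

From HB Require Import structures.
From mathcomp Require Import all_boot all_order all_algebra.
Set Implicit Arguments. Unset Strict Implicit. Unset Printing Implicit Defensive.
Import GRing.Theory.
Local Open Scope ring_scope.

Definition F2 := 'F_2.

Definition dotF2 n (x y : 'rV[F2]_n) : F2 := \sum_(i < n) x 0 i * y 0 i.

Definition vs_elems n (C : {vspace 'rV[F2]_n}) : seq 'rV[F2]_n :=
  [seq x <- enum (Finite.clone _ 'rV[F2]_n) | x \in C].

Definition dualc n (C : {vspace 'rV[F2]_n}) : {vspace 'rV[F2]_n} :=
  <<[seq y <- enum (Finite.clone _ 'rV[F2]_n) |
       [forall x : 'rV[F2]_n, (x \in C) ==> (dotF2 x y == 0%R)]]>>%VS.

Definition starv n (a b : 'rV[F2]_n) : 'rV[F2]_n := \row_i (a 0 i * b 0 i).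

Definition starc n (A B : {vspace 'rV[F2]_n}) : {vspace 'rV[F2]_n} :=
  <<[seq starv a b | a <- vs_elems A, b <- vs_elems B]>>%VS.

Definition supp n (x : 'rV[F2]_n) : {set 'I_n} := [set i | x 0 i != 0].
Definition hwt n (x : 'rV[F2]_n) : nat := #|supp x|.

Definition restr n (S : {set 'I_n}) (y : 'rV[F2]_n) : 'rV[F2]_#|S| :=
  \row_(j < #|S|) y 0 (enum_val j).

Definition restr_code n (S : {set 'I_n}) (Cx : {vspace 'rV[F2]_n})
  : {vspace 'rV[F2]_#|S|} :=
  <<[seq restr S y | y <- vs_elems Cx]>>%VS.

Definition even_code n (C : {vspace 'rV[F2]_n}) : Prop :=
  forall x, x \in C -> ~~ odd (hwt x).

Definition supported_on n (x : 'rV[F2]_n) (Cx : {vspace 'rV[F2]_n}) : Prop :=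
  forall y, y \in Cx -> forall i, x 0 i = 0 -> y 0 i = 0.

Definition self_dual_on_supp n (x : 'rV[F2]_n) (Cx : {vspace 'rV[F2]_n}) : Prop :=
  restr_code (supp x) Cx = dualc (restr_code (supp x) Cx).

Definition CSST_pair n (C1 C2 : {vspace 'rV[F2]_n}) : Prop :=
  (C2 <= C1)%VS /\ even_code C2 /\
  forall x, x \in C2 ->
    exists Cx : {vspace 'rV[F2]_n},
      [/\ (Cx <= dualc C1)%VS, \dim Cx = (hwt x)./2,
          supported_on x Cx & self_dual_on_supp x Cx].

(** Write [S] for the support of [x].  A pair of codewords [a, b] of [C1]
    restricts to vectors on [S] with [<a|S, b|S> = <a * b, x>], so the
    condition [C1 * C1 <= C2^perp] says exactly that, for every [x] in [C2],
    the restriction [C1|S] is self-orthogonal.  It contains [x|S], the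
    all-ones vector, so [|S|] is even and [C1|S] extends to a self-dual code
    [D] of length [|S|], of dimension [|S|/2]; padding [D] with zeros outside
    [S] gives the required [C_x] in [C1^perp].  Conversely, if [C_x|S] is
    self-dual and orthogonal to [C1|S], then [C1|S] lies in it, hence is
    self-orthogonal. *)

From mathcomp Require Import all_boot all_order all_algebra zify.
Set Implicit Arguments. Unset Strict Implicit. Unset Printing Implicit Defensive.
Import GRing.Theory.
Local Open Scope ring_scope.

Lemma F2_cases (a : F2) : a = 0 \/ a = 1.
Proof. by case: a => -[|[|//]] H; [left|right]; exact/val_inj. Qed.

Lemma F2_mulxx (a : F2) : a * a = a.
Proof. by case: (F2_cases a) => ->; rewrite ?mul0r ?mul1r. Qed.

Lemma F2_neq0 (a : F2) : a != 0 -> a = 1.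
Proof. by case: (F2_cases a) => ->; rewrite ?eqxx. Qed.

Lemma F2_natr_eq0 m : (m%:R == 0 :> F2) = ~~ odd m.
Proof.
rewrite -(inj_eq val_inj) /= (val_Fp_nat (isT : prime 2)) modn2.
by case: (odd m).
Qed.

Section Dot.
Variable n : nat.
Implicit Types (x y z : 'rV[F2]_n) (C : {vspace 'rV[F2]_n}).

Lemma dotC x y : dotF2 x y = dotF2 y x.
Proof. by apply: eq_bigr => i _; rewrite mulrC. Qed.

Lemma dotDr x y z : dotF2 x (y + z) = dotF2 x y + dotF2 x z.
Proof. by rewrite /dotF2 -big_split; apply: eq_bigr => i _; rewrite mxE mulrDr. Qed.

Lemma dotZr x y (a : F2) : dotF2 x (a *: y) = a * dotF2 x y.
Proof. by rewrite /dotF2 mulr_sumr; apply: eq_bigr => i _; rewrite mxE mulrCA. Qed.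

Lemma dot0r x : dotF2 x 0 = 0.
Proof. by rewrite /dotF2 big1 // => i _; rewrite mxE mulr0. Qed.

Lemma dotDl x y z : dotF2 (y + z) x = dotF2 y x + dotF2 z x.
Proof. by rewrite !(dotC _ x) dotDr. Qed.

Lemma dotZl x y (a : F2) : dotF2 (a *: y) x = a * dotF2 y x.
Proof. by rewrite !(dotC _ x) dotZr. Qed.

Lemma dot_sumr I (r : seq I) (P : pred I) (F : I -> 'rV[F2]_n) x :
  dotF2 x (\sum_(i <- r | P i) F i) = \sum_(i <- r | P i) dotF2 x (F i).
Proof. by elim/big_rec2: _ => [|i a v _ <-]; rewrite ?dot0r ?dotDr. Qed.

Lemma dot_delta (i : 'I_n) y : dotF2 (delta_mx 0 i) y = y 0 i.
Proof.
rewrite /dotF2 (bigD1 i) //= big1 => [|l Hl]; rewrite !mxE ?eqxx ?mul1r ?addr0 //.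
by rewrite (negbTE Hl) mul0r.
Qed.

Lemma dot_self x : dotF2 x x = dotF2 (const_mx 1) x.
Proof. by apply: eq_bigr => i _; rewrite mxE F2_mulxx mul1r. Qed.

Lemma span_orthP (s : seq 'rV[F2]_n) z :
  (forall v, v \in s -> dotF2 v z = 0) -> forall u, u \in <<s>>%VS -> dotF2 u z = 0.
Proof.
move=> sz u su; rewrite (coord_span (X := in_tuple s) su) dotC dot_sumr big1 // => i _.
by rewrite dotZr dotC sz ?mulr0 // mem_nth.
Qed.

Lemma memv_dualc C y : reflect (forall x, x \in C -> dotF2 x y = 0) (y \in dualc C).
Proof.
apply: (iffP idP) => [Cy x Cx | Cy].
  rewrite dotC; apply: (span_orthP _ Cy) => v.
  rewrite mem_filter => /andP[/forallP /(_ x) + _].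
  by rewrite Cx dotC => /eqP.
apply: memv_span; rewrite mem_filter mem_enum andbT.
by apply/forallP => x; apply/implyP => /Cy ->.
Qed.

Lemma memv_dualc_span (s : seq 'rV[F2]_n) y :
  reflect (forall v, v \in s -> dotF2 v y = 0) (y \in dualc <<s>>).
Proof.
apply: (iffP (memv_dualc _ _)) => [sy v sv | ]; last exact: span_orthP.
by apply: sy; apply: memv_span.
Qed.

Lemma dualcS C C' : (C <= C')%VS -> (dualc C' <= dualc C)%VS.
Proof.
move=> /subvP CC'; apply/subvP => y /memv_dualc C'y.
by apply/memv_dualc => x /CC'; apply: C'y.
Qed.

Lemma span_self_orth (s : seq 'rV[F2]_n) :
  (forall u v, u \in s -> v \in s -> dotF2 u v = 0) -> (<<s>> <= dualc <<s>>)%VS.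
Proof.
move=> s_orth; apply/subvP => y sy; apply/memv_dualc_span => u su.
by rewrite dotC; apply: (span_orthP _ sy) => v sv; rewrite s_orth.
Qed.

Lemma mem_vs_elems C x : (x \in vs_elems C) = (x \in C).
Proof. by rewrite mem_filter mem_enum andbT. Qed.

End Dot.

Section DualDimension.
Variables (m : nat) (U : {vspace 'rV[F2]_m}).

Let b := vbasis U.

Definition dot_basis : 'Hom('rV[F2]_m, 'rV[F2]_(\dim U)) :=
  linfun (mulmxr (\matrix_(i < m, j < \dim U) b`_j 0 i)).

Lemma dot_basisE y j : dot_basis y 0 j = dotF2 y b`_j.
Proof. by rewrite lfunE /= mxE; apply: eq_bigr => i _; rewrite mxE. Qed.

Lemma lker_dot_basis : lker dot_basis = dualc U.
Proof.
apply/vspaceP => y; rewrite memv_ker.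
apply/eqP/memv_dualc => [y0 x /coord_vbasis -> | yU].
  rewrite dotC dot_sumr big1 // => j _.
  by rewrite dotZr -dot_basisE y0 mxE mulr0.
by apply/rowP => j; rewrite dot_basisE mxE dotC yU // vbasis_mem // mem_nth ?size_tuple.
Qed.

Lemma dim_dualc_limg : (\dim (dualc U) + \dim (limg dot_basis) = m)%N.
Proof.
rewrite -lker_dot_basis; have := limg_ker_dim dot_basis fullv.
by rewrite capfv dimvf /dim /= mul1n.
Qed.

Lemma dim_dualc_lb : (m <= \dim (dualc U) + \dim U)%N.
Proof.
rewrite -{1}dim_dualc_limg leq_add2l.
by rewrite (leq_trans (dimvS (subvf _))) // dimvf /dim /= mul1n.
Qed.

End DualDimension.

(* Surjectivity of [dot_basis U]: a vector [z] orthogonal to its image gives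
   the relation [sum_j z_j b_j = 0] among the basis vectors. *)
Lemma dualc_limg_dot_basis m (U : {vspace 'rV[F2]_m}) :
  dualc (limg (dot_basis U)) = 0%VS.
Proof.
apply/eqP; rewrite -subv0; apply/subvP => z /memv_dualc z_orth; rewrite memv0.
have rel : \sum_(j < \dim U) z 0 j *: (vbasis U)`_j = 0.
  apply/rowP => i; rewrite mxE -dot_delta dot_sumr.
  rewrite -[RHS](z_orth _ (memv_img _ (memvf (delta_mx 0 i)))).
  by apply: eq_bigr => j _; rewrite dot_basisE dotZr mulrC.
have /freeP/(_ _ rel) z0 := basis_free (vbasisP U).
by apply/eqP/rowP => j; rewrite z0 mxE.
Qed.

Lemma dim_dualc m (U : {vspace 'rV[F2]_m}) : (\dim (dualc U) + \dim U = m)%N.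
Proof.
have img_full : \dim (limg (dot_basis U)) = \dim U.
  apply/eqP; rewrite eqn_leq (leq_trans (dimvS (subvf _))) ?dimvf /dim /= ?mul1n //.
  by have := dim_dualc_lb (limg (dot_basis U)); rewrite dualc_limg_dot_basis dimv0.
by rewrite -img_full dim_dualc_limg.
Qed.

Section SelfDualExtension.
Variable w : nat.
Implicit Types A : {vspace 'rV[F2]_w}.

(* [<v, v> = <1, v> = 0] when the all-ones vector lies in [A] and [v] in [A^perp]. *)
Lemma self_orth_addv_line A v :
  (A <= dualc A)%VS -> const_mx 1 \in A -> v \in dualc A ->
  (A + <[v]> <= dualc (A + <[v]>))%VS.
Proof.
move=> AA A1 /memv_dualc vA; apply/subvP => y /memv_addP[a Aa [u /vlineP[k ->] ->]].
apply/memv_dualc => x /memv_addP[a' Aa' [u' /vlineP[k' ->] ->]].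
rewrite !(dotDl, dotDr, dotZl, dotZr) (memv_dualc _ _ (subvP AA _ Aa) _ Aa').
by rewrite vA // dotC vA // dot_self vA // !mulr0 !addr0.
Qed.

Lemma self_orth_extend A :
  (A <= dualc A)%VS -> const_mx 1 \in A ->
  exists2 D : {vspace 'rV[F2]_w}, (A <= D)%VS & D = dualc D.
Proof.
have [k] := ubnP (w - \dim A); elim: k A => [//|k IH] A codim AA A1.
have [dAA | /subvPn[v vA vNA]] := boolP (dualc A <= A)%VS.
  by exists A => //; apply/eqP; rewrite eqEsubv AA.
have A_Av : (A <= A + <[v]>)%VS by apply: addvSl.
have dim_lt : (\dim A < \dim (A + <[v]>))%N.
  rewrite (ltn_leqif (dimv_leqif_sup A_Av)); apply: contra vNA => /subvP; apply.
  exact: subvP (addvSr _ _) _ (memv_line v).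
have dim_le : (\dim (A + <[v]>) <= w)%N.
  by rewrite (leq_trans (dimvS (subvf _))) // dimvf /dim /= mul1n.
have [|||D AvD DD] := IH (A + <[v]>)%VS; first by lia.
- exact: self_orth_addv_line.
- exact: subvP A_Av _ A1.
by exists D => //; apply: subv_trans AvD.
Qed.

End SelfDualExtension.

Section RestrictExtend.
Variables (n : nat) (S : {set 'I_n}).

(* Extension by zeros outside [S], the right inverse of [restr S]. *)
Definition ext_mx : 'M[F2]_(#|S|, n) := \matrix_(j, i) (enum_val j == i)%:R.

Lemma ext_mx_enum_val (d : 'rV[F2]_#|S|) j : (d *m ext_mx) 0 (enum_val j) = d 0 j.
Proof.
rewrite mxE (bigD1 j) //= big1 => [|l Hl]; rewrite mxE ?eqxx ?mulr1 ?addr0 //.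
by rewrite (inj_eq enum_val_inj) (negbTE Hl) mulr0.
Qed.

Lemma ext_mx_notin (d : 'rV[F2]_#|S|) i : i \notin S -> (d *m ext_mx) 0 i = 0.
Proof.
move=> iNS; rewrite mxE big1 // => l _; rewrite mxE.
have /negbTE -> : enum_val l != i by apply: contraNneq iNS => <-; apply: enum_valP.
by rewrite mulr0.
Qed.

Lemma restr_ext (d : 'rV[F2]_#|S|) : restr S (d *m ext_mx) = d.
Proof. by apply/rowP => j; rewrite mxE ext_mx_enum_val. Qed.

Lemma sum_supported (f : 'I_n -> F2) : (forall i, i \notin S -> f i = 0) ->
  \sum_i f i = \sum_(j < #|S|) f (enum_val j).
Proof.
move=> fS; rewrite (bigID (mem S)) /= [X in _ + X]big1 ?addr0 => [|i /fS //].
exact: big_enum_val.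
Qed.

Lemma dot_ext (c : 'rV[F2]_n) (d : 'rV[F2]_#|S|) :
  dotF2 c (d *m ext_mx) = dotF2 (restr S c) d.
Proof.
rewrite /dotF2 sum_supported => [|i iNS]; last by rewrite ext_mx_notin ?mulr0.
by apply: eq_bigr => j _; rewrite ext_mx_enum_val mxE.
Qed.

Lemma dot_restr (y z : 'rV[F2]_n) : (forall i, i \notin S -> y 0 i = 0) ->
  dotF2 y z = dotF2 (restr S y) (restr S z).
Proof.
move=> yS; rewrite /dotF2 sum_supported => [|i /yS ->]; last by rewrite mul0r.
by apply: eq_bigr => j _; rewrite !mxE.
Qed.

Lemma memv_restr_code (C : {vspace 'rV[F2]_n}) y :
  y \in C -> restr S y \in restr_code S C.
Proof. by move=> Cy; apply: memv_span; apply: map_f; rewrite mem_vs_elems. Qed.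

Lemma memv_dualc_restr_code (C : {vspace 'rV[F2]_n}) d :
  reflect (forall y, y \in C -> dotF2 (restr S y) d = 0)
          (d \in dualc (restr_code S C)).
Proof.
apply: (iffP (memv_dualc_span _ _)) => [Cd y Cy | Cd v /mapP[y]].
  by apply: Cd; apply: map_f; rewrite mem_vs_elems.
by rewrite mem_vs_elems => Cy ->; apply: Cd.
Qed.

End RestrictExtend.

Section Support.
Variable n : nat.
Implicit Types (a b x : 'rV[F2]_n).

Lemma supp1 x i : i \in supp x -> x 0 i = 1.
Proof. by rewrite inE => /F2_neq0. Qed.

Lemma supp0 x i : i \notin supp x -> x 0 i = 0.
Proof. by rewrite inE negbK => /eqP. Qed.

Lemma dot_starv a b x :
  dotF2 (starv a b) x = dotF2 (restr (supp x) a) (restr (supp x) b).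
Proof.
rewrite /dotF2 (@sum_supported _ (supp x)) => [|i /supp0 ->]; last by rewrite mulr0.
by apply: eq_bigr => j _; rewrite !mxE (supp1 (enum_valP j)) mulr1.
Qed.

Lemma restr_supp x : restr (supp x) x = const_mx 1.
Proof. by apply/rowP => j; rewrite !mxE (supp1 (enum_valP j)). Qed.

Lemma starvv x : starv x x = x.
Proof. by apply/rowP => i; rewrite mxE F2_mulxx. Qed.

Lemma dot_hwt x : dotF2 x x = (hwt x)%:R.
Proof.
rewrite dot_self /dotF2 (bigID (mem (supp x))) /= [X in _ + X]big1 => [|i /supp0 ->].
  rewrite addr0 -sumr_const; apply: eq_bigr => i /supp1 ->.
  by rewrite mxE mul1r.
by rewrite mulr0.
Qed.

End Support.

Lemma dim_self_dual w (D : {vspace 'rV[F2]_w}) : D = dualc D -> \dim D = w./2.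
Proof. by move=> DD; rewrite -[in RHS](dim_dualc D) -DD addnn doubleK. Qed.

Section ExtendCode.
Variables (n : nat) (S : {set 'I_n}).

Definition ext_lin : 'Hom('rV[F2]_#|S|, 'rV[F2]_n) := linfun (mulmxr (ext_mx S)).

Lemma ext_linE d : ext_lin d = d *m ext_mx S.
Proof. by rewrite lfunE. Qed.

Lemma ext_lin_inj : injective ext_lin.
Proof. by move=> d d'; rewrite !ext_linE => /(congr1 (restr S)); rewrite !restr_ext. Qed.

Lemma dim_ext_lin (D : {vspace 'rV[F2]_#|S|}) : \dim (ext_lin @: D) = \dim D.
Proof. by rewrite limg_dim_eq // (eqP (introT lker0P ext_lin_inj)) capv0. Qed.

Lemma restr_code_ext_lin (D : {vspace 'rV[F2]_#|S|}) : restr_code S (ext_lin @: D) = D.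
Proof.
apply/eqP; rewrite eqEsubv; apply/andP; split.
  apply/span_subvP => v /mapP[y]; rewrite mem_vs_elems => /memv_imgP[d Dd ->] ->.
  by rewrite ext_linE restr_ext.
apply/subvP => d Dd; rewrite -(restr_ext d) -ext_linE.
by apply: memv_restr_code; apply: memv_img.
Qed.

Lemma ext_lin_dualc (C : {vspace 'rV[F2]_n}) (D : {vspace 'rV[F2]_#|S|}) :
  (D <= dualc (restr_code S C))%VS -> (ext_lin @: D <= dualc C)%VS.
Proof.
move=> /subvP DC; apply/subvP => _ /memv_imgP[d /DC Dd ->].
apply/memv_dualc => c Cc; rewrite ext_linE dot_ext.
exact: memv_dualc_restr_code Dd c Cc.
Qed.

End ExtendCode.

Section CSSTPair.
Variables (n : nat) (C1 C2 : {vspace 'rV[F2]_n}).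

Lemma CSST_pair_starc : CSST_pair C1 C2 -> (starc C1 C1 <= dualc C2)%VS.
Proof.
case=> _ [_ CxP]; apply/span_subvP => _ /allpairsP[[a b] [/= + + ->]].
rewrite mem_vs_elems => Ca; rewrite mem_vs_elems => Cb; apply/memv_dualc => x C2x; rewrite dotC dot_starv.
have [Cx [CxC1 _ Cx_supp Cx_sd]] := CxP x C2x.
have restr_C1 c : c \in C1 -> restr (supp x) c \in restr_code (supp x) Cx.
  move=> C1c; rewrite Cx_sd; apply/memv_dualc_restr_code => y Cxy.
  rewrite -dot_restr => [|i /supp0]; last exact: Cx_supp.
  by rewrite dotC; apply: (memv_dualc _ _ (subvP CxC1 _ Cxy)).
by move: (restr_C1 b Cb); rewrite Cx_sd => /memv_dualc; apply; apply: restr_C1.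
Qed.

Hypothesis starc_C2 : (starc C1 C1 <= dualc C2)%VS.

Lemma dot_starv_starc a b x :
  a \in C1 -> b \in C1 -> x \in C2 -> dotF2 x (starv a b) = 0.
Proof.
move=> Ca Cb C2x; apply: (memv_dualc _ _ (subvP starc_C2 _ _)) => //.
by apply: memv_span; apply/allpairsP; exists (a, b); rewrite !mem_vs_elems.
Qed.

Hypothesis C21 : (C2 <= C1)%VS.

Lemma starc_even_code : even_code C2.
Proof.
move=> x C2x; have C1x := subvP C21 _ C2x.
by rewrite -F2_natr_eq0 -dot_hwt -{2}(starvv x) dot_starv_starc.
Qed.

Lemma starc_restr_self_orth x : x \in C2 ->
  (restr_code (supp x) C1 <= dualc (restr_code (supp x) C1))%VS.
Proof.
move=> C2x; apply: span_self_orth => _ _ /mapP[a + ->] /mapP[b + ->].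
by rewrite !mem_vs_elems => Ca Cb; rewrite -dot_starv dotC dot_starv_starc.
Qed.

Lemma starc_CSST_pair : CSST_pair C1 C2.
Proof.
split=> //; split; first exact: starc_even_code.
move=> x C2x; set S := supp x.
have [|D C1D DD] := self_orth_extend (starc_restr_self_orth C2x).
  by rewrite -(restr_supp x); apply: memv_restr_code; apply: subvP C21 _ C2x.
exists (ext_lin S @: D)%VS; split.
- by apply: ext_lin_dualc; rewrite DD dualcS.
- by rewrite dim_ext_lin (dim_self_dual DD).
- move=> _ /memv_imgP[d _ ->] i xi0; rewrite ext_linE ext_mx_notin //.
  by rewrite inE xi0 eqxx.
- by rewrite /self_dual_on_supp restr_code_ext_lin.
Qed.

End CSSTPair.

Theorem mainTheorem2 (n : nat) (C1 C2 : {vspace 'rV[F2]_n}) :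
  (C2 <= C1)%VS ->
  (CSST_pair C1 C2 <-> (starc C1 C1 <= dualc C2)%VS).
Proof.
move=> C21; split; first exact: CSST_pair_starc.
by move=> starc_C2; apply: starc_CSST_pair.
Qed.
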